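(* If a liner $X$ is $\kappa$-parallel for some finite nonzero cardinal $\kappa$, then for every triangle $abc$ in $X$ there exists a point $d\in X$ such that $abcd$ is a parallelogram.
   Context: A liner is a set $X$ of points with a family of subsets called lines such that any two distinct points lie in a unique line and every line contains at least two points. For distinct $x,y$, $\overline{xy}$ is the line through them and $\overline{xx}:=\{x\}$. A set is flat if it contains $\overline{xy}$ for all its distinct points; $\overline A$ is the smallest flat containing $A$; the rank $\|A\|$ is the smallest cardinality of $B\subseteq X$ with $A\subseteq\overline B$; a plane is a flat of rank 3. $X$ is $\kappa$-parallel if for every plane $P$, line $L\subseteq P$ and point $x\in P\setminus L$ there exist exactly $\kappa$ lines $\Lambda$ with $x\in\Lambda\subseteq P\setminus L$. A triangle is a triple $abc\in X^3$ with $\|\{a,b,c\}\|=3$. A flat $A$ is subparallel to a flat $B$ if $A\subseteq\overline{\{a\}\cup B}$ for every $a\in A$; $A\parallel B$ means each is subparallel to the other. A parallelogram is a quadruple $abcd\in X^4$ with $\overline{ab}\parallel\overline{cd}\ne\overline{ab}$ and $\overline{bc}\parallel\overline{ad}\ne\overline{bc}$. *)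

From Stdlib Require Import List Arith.
Import ListNotations.

Section Liners.
Context {T : Type}.

Definition set_eq (A B : T -> Prop) : Prop := forall z, A z <-> B z.
Definition subset (A B : T -> Prop) : Prop := forall z, A z -> B z.

Definition is_liner (Lines : (T -> Prop) -> Prop) : Prop :=
  (forall x y, x <> y -> exists L, Lines L /\ L x /\ L y) /\
  (forall x y L L', x <> y -> Lines L -> Lines L' ->
      L x -> L y -> L' x -> L' y -> set_eq L L') /\
  (forall L, Lines L -> exists x y, x <> y /\ L x /\ L y).

(* overline{xy}: the line through x and y if x <> y, and {x} if x = y. *)
Definition line_through (Lines : (T -> Prop) -> Prop) (x y : T) : T -> Prop :=
  fun z => z = x \/ (x <> y /\ exists L, Lines L /\ L x /\ L y /\ L z).

Definition flat (Lines : (T -> Prop) -> Prop) (A : T -> Prop) : Prop :=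
  forall x y, A x -> A y -> subset (line_through Lines x y) A.

Definition flat_hull (Lines : (T -> Prop) -> Prop) (A : T -> Prop) : T -> Prop :=
  fun z => forall F, flat Lines F -> subset A F -> F z.

Definition rank_le (Lines : (T -> Prop) -> Prop) (A : T -> Prop) (n : nat) : Prop :=
  exists B : list T, length B <= n /\ subset A (flat_hull Lines (fun z => In z B)).

Definition has_rank (Lines : (T -> Prop) -> Prop) (A : T -> Prop) (n : nat) : Prop :=
  rank_le Lines A n /\ forall m, m < n -> ~ rank_le Lines A m.

Definition plane (Lines : (T -> Prop) -> Prop) (P : T -> Prop) : Prop :=
  flat Lines P /\ has_rank Lines P 3.

(* "there exist exactly k sets satisfying Q", counted up to extensional equality *)
Definition exactly_n (Q : (T -> Prop) -> Prop) (k : nat) : Prop :=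
  exists l : list (T -> Prop),
    length l = k /\
    (forall i j, i < k -> j < k -> i <> j ->
        ~ set_eq (nth i l (fun _ => False)) (nth j l (fun _ => False))) /\
    (forall A, In A l -> Q A) /\
    (forall A, Q A -> exists B, In B l /\ set_eq A B).

Definition kappa_parallel (Lines : (T -> Prop) -> Prop) (k : nat) : Prop :=
  forall P L x, plane Lines P -> Lines L -> subset L P -> P x -> ~ L x ->
    exactly_n (fun M => Lines M /\ M x /\
                        subset M (fun z => P z /\ ~ L z)) k.

Definition triangle (Lines : (T -> Prop) -> Prop) (a b c : T) : Prop :=
  has_rank Lines (fun z => z = a \/ z = b \/ z = c) 3.

Definition subparallel (Lines : (T -> Prop) -> Prop) (A B : T -> Prop) : Prop :=
  forall a, A a -> subset A (flat_hull Lines (fun z => z = a \/ B z)).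

Definition parallel (Lines : (T -> Prop) -> Prop) (A B : T -> Prop) : Prop :=
  subparallel Lines A B /\ subparallel Lines B A.

Definition parallelogram (Lines : (T -> Prop) -> Prop) (a b c d : T) : Prop :=
  parallel Lines (line_through Lines a b) (line_through Lines c d) /\
  ~ set_eq (line_through Lines c d) (line_through Lines a b) /\
  parallel Lines (line_through Lines b c) (line_through Lines a d) /\
  ~ set_eq (line_through Lines a d) (line_through Lines b c).

End Liners.

(* Let P be the plane spanned by the triangle abc. Two disjoint lines L, N of P are
   parallel: the k parallels to L through a point x of N inside the plane spanned by
   x and L are already all k parallels to L through x inside P, so N is one of them
   and lies in that plane.
   Take a parallel M to ab through c. Among the k parallels to bc through a, one must
   meet M: otherwise they, together with ab (which meets bc), would be k + 1 parallels
   to M through a. The intersection point is the fourth vertex d. *)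
From Stdlib Require Import List Arith Lia Classical.
Import ListNotations.

Section Counting.
Context {T : Type}.

Lemma set_eq_sym (A B : T -> Prop) : set_eq A B -> set_eq B A.
Proof. intros H z; specialize (H z); tauto. Qed.

Lemma set_eq_trans (A B C : T -> Prop) : set_eq A B -> set_eq B C -> set_eq A C.
Proof. intros H H' z; specialize (H z); specialize (H' z); tauto. Qed.

Definition pairwise_distinct (l : list (T -> Prop)) : Prop :=
  forall i j, i < length l -> j < length l -> i <> j ->
    ~ set_eq (nth i l (fun _ => False)) (nth j l (fun _ => False)).

Lemma pigeonhole_rel n : forall m (R : nat -> nat -> Prop),
  (forall i, i < n -> exists j, j < m /\ R i j) ->
  (forall i i' j, i < n -> i' < n -> R i j -> R i' j -> i = i') -> n <= m.
Proof.
  induction n as [|n IH]; intros m R Hex Hinj; [lia|].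
  destruct (Hex n ltac:(lia)) as [j0 [Hj0 Rj0]].
  (* drop the hole [j0] by shifting the holes above it down by one *)
  assert (n <= m - 1); [|lia].
  apply (IH (m - 1) (fun i j => R i (if j <? j0 then j else S j))).
  - intros i Hi. destruct (Hex i ltac:(lia)) as [j [Hj Rj]].
    destruct (Nat.lt_trichotomy j j0) as [Hlt|[->|Hgt]].
    + exists j. rewrite (proj2 (Nat.ltb_lt j j0) Hlt). split; [lia|exact Rj].
    + pose proof (Hinj i n j0 ltac:(lia) ltac:(lia) Rj Rj0); lia.
    + exists (j - 1). rewrite (proj2 (Nat.ltb_ge (j - 1) j0)) by lia.
      replace (S (j - 1)) with j by lia. split; [lia|exact Rj].
  - intros i i' j Hi Hi'. apply Hinj; lia.
Qed.

Lemma exactly_n_list (Q : (T -> Prop) -> Prop) k : exactly_n Q k ->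
  exists l, length l = k /\ pairwise_distinct l /\ forall A, In A l -> Q A.
Proof.
  intros [l [Hl [Hd [HQ _]]]]. exists l. split; [exact Hl|split; [|exact HQ]].
  intros i j. rewrite Hl. apply Hd.
Qed.

Lemma exactly_n_bound (Q : (T -> Prop) -> Prop) k l : exactly_n Q k ->
  pairwise_distinct l -> (forall A, In A l -> Q A) -> length l <= k.
Proof.
  intros [l' [Hl' [_ [_ Hcov]]]] Hd HQ. rewrite <- Hl'.
  apply (pigeonhole_rel _ _
    (fun i j => set_eq (nth i l (fun _ => False)) (nth j l' (fun _ => False)))).
  - intros i Hi. destruct (Hcov _ (HQ _ (nth_In _ (fun _ => False) Hi))) as [B [HB HAB]].
    destruct (In_nth _ _ (fun _ => False) HB) as [j [Hj <-]]. eauto.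
  - intros i i' j Hi Hi' H H'. apply NNPP; intro Hii'.
    apply (Hd i i' Hi Hi' Hii'), (set_eq_trans _ _ _ H), set_eq_sym, H'.
Qed.

Lemma pairwise_distinct_snoc l A : pairwise_distinct l ->
  (forall B, In B l -> ~ set_eq A B) -> pairwise_distinct (l ++ [A]).
Proof.
  intros Hd Hnew.
  assert (Hnth : forall i, i < length l ->
    nth i (l ++ [A]) (fun _ => False) = nth i l (fun _ => False))
    by (intros; apply app_nth1; lia).
  assert (Hlast : nth (length l) (l ++ [A]) (fun _ => False) = A)
    by (rewrite app_nth2, Nat.sub_diag by lia; reflexivity).
  intros i j. rewrite length_app; simpl. intros Hi Hj Hij.
  destruct (Nat.eq_dec i (length l)) as [->|Hi'];
    destruct (Nat.eq_dec j (length l)) as [->|Hj']; try congruence;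
    rewrite ?Hlast, ?Hnth by lia.
  - apply Hnew, nth_In; lia.
  - intro H. apply (Hnew (nth i l (fun _ => False))); [apply nth_In; lia|].
    apply set_eq_sym, H.
  - apply Hd; lia.
Qed.

Lemma exactly_n_complete (Q : (T -> Prop) -> Prop) k l A : exactly_n Q k ->
  length l = k -> pairwise_distinct l -> (forall B, In B l -> Q B) -> Q A ->
  exists B, In B l /\ set_eq A B.
Proof.
  intros Hk Hl Hd HQ QA. apply NNPP; intro Hnew.
  assert (Hbound : length (l ++ [A]) <= k).
  { apply (exactly_n_bound Q); auto.
    - apply pairwise_distinct_snoc; eauto.
    - intros B HB. apply in_app_or in HB. destruct HB as [|[<-|[]]]; auto. }
  rewrite length_app in Hbound; simpl in Hbound; lia.
Qed.

End Counting.

Section Liner.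
Context {T : Type} (Lines : (T -> Prop) -> Prop).
Hypothesis HX : is_liner Lines.

Definition triple (x p q : T) : T -> Prop := fun z => z = x \/ z = p \/ z = q.

Definition collinear (S : T -> Prop) : Prop := rank_le Lines S 2.

Definition disjoint (A B : T -> Prop) : Prop := forall z, A z -> ~ B z.

Definition parallel_through (P L : T -> Prop) (x : T) (M : T -> Prop) : Prop :=
  Lines M /\ M x /\ subset M (fun z => P z /\ ~ L z).

Lemma line_through_eq u v L : u <> v -> Lines L -> L u -> L v ->
  set_eq (line_through Lines u v) L.
Proof.
  destruct HX as [_ [Huniq _]]. intros Huv HL Lu Lv z; split.
  - intros [->|[_ [L' [HL' [L'u [L'v L'z]]]]]]; [exact Lu|].
    exact (proj1 (Huniq u v L' L Huv HL' HL L'u L'v Lu Lv z) L'z).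
  - intro Lz. right. split; [exact Huv|]. exists L; auto.
Qed.

Lemma flat_hull_flat A : flat Lines (flat_hull Lines A).
Proof. intros x y Hx Hy z Hz F HF HA. apply (HF x y); [apply Hx|apply Hy|]; auto. Qed.

Lemma subset_flat_hull A : subset A (flat_hull Lines A).
Proof. intros z Hz F _ HA; auto. Qed.

Lemma flat_hull_min A F : flat Lines F -> subset A F -> subset (flat_hull Lines A) F.
Proof. intros HF HA z Hz; apply Hz; auto. Qed.

Lemma flat_hull_mono A B : subset A B -> subset (flat_hull Lines A) (flat_hull Lines B).
Proof.
  intros HAB. apply flat_hull_min; [apply flat_hull_flat|].
  intros z Hz; apply subset_flat_hull, HAB, Hz.
Qed.

Lemma singleton_flat u : flat Lines (fun z => z = u).
Proof. intros x y -> -> z [->|[Hne _]]; [reflexivity|congruence]. Qed.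

Lemma line_flat L : Lines L -> flat Lines L.
Proof.
  intros HL x y Lx Ly z [->|[Hxy [L' [HL' [L'x [L'y L'z]]]]]]; [exact Lx|].
  destruct HX as [_ [Huniq _]].
  exact (proj1 (Huniq x y L' L Hxy HL' HL L'x L'y Lx Ly z) L'z).
Qed.

Lemma line_subset_flat F L p q : flat Lines F -> F p -> F q -> p <> q ->
  Lines L -> L p -> L q -> subset L F.
Proof.
  intros HF Fp Fq Hpq HL Lp Lq z Lz.
  apply (HF p q Fp Fq), (line_through_eq p q L); auto.
Qed.

Lemma collinear_subset S S' : subset S' S -> collinear S -> collinear S'.
Proof. intros H [B [HB HS]]. exists B. split; [exact HB|]. intros z Hz; auto. Qed.

Lemma collinear_triple_of_line x p q L : Lines L -> L x -> L p -> L q ->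
  collinear (triple x p q).
Proof.
  intros HL Lx Lp Lq. destruct (classic (p = q)) as [<-|Hpq].
  - exists [x; p]. split; [simpl; lia|].
    intros z Hz. apply subset_flat_hull. simpl. unfold triple in Hz. intuition.
  - exists [p; q]. split; [simpl; lia|].
    intros z Hz. apply (line_subset_flat _ L p q); auto.
    + apply flat_hull_flat.
    + apply subset_flat_hull; simpl; auto.
    + apply subset_flat_hull; simpl; auto.
    + unfold triple in Hz; intuition congruence.
Qed.

Lemma collinear_on_line x p q L : collinear (triple x p q) -> p <> q ->
  Lines L -> L p -> L q -> L x.
Proof.
  intros [B [HB Hsub]] Hpq HL Lp Lq.
  assert (Hpoint :
    forall u, ~ subset (flat_hull Lines (fun z => In z B)) (fun z => z = u)).
  { intros u H. apply Hpq. rewrite (H p), (H q); auto; apply Hsub; unfold triple; auto. }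
  destruct B as [|u [|v [|w B]]]; simpl in HB; try lia.
  - exfalso. refine (Hsub x _ (fun _ => False) _ _); [left; reflexivity|intros ? ? []|].
    intros ? [].
  - exfalso. apply (Hpoint u), flat_hull_min; [apply singleton_flat|].
    intros z [<-|[]]; reflexivity.
  - destruct (classic (u = v)) as [<-|Huv].
    + exfalso. apply (Hpoint u), flat_hull_min; [apply singleton_flat|].
      intros z [<-|[<-|[]]]; reflexivity.
    + destruct HX as [Hex [Huniq _]].
      destruct (Hex u v Huv) as [L0 [HL0 [L0u L0v]]].
      assert (HL0sub : subset (triple x p q) L0).
      { intros z Hz.
        apply (flat_hull_min (fun w => In w [u; v]) L0 (line_flat L0 HL0)), Hsub, Hz.
        intros w [<-|[<-|[]]]; assumption. }
      apply (Huniq p q L0 L Hpq HL0 HL); auto; apply HL0sub; unfold triple; auto.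
Qed.

Lemma noncollinear_neq x p q : ~ collinear (triple x p q) -> p <> q.
Proof.
  intros Hn ->. apply Hn. exists [x; q]. split; [simpl; lia|].
  intros z Hz. apply subset_flat_hull. simpl. unfold triple in Hz. intuition.
Qed.

Lemma noncollinear_not_on_line x p q L : ~ collinear (triple x p q) ->
  Lines L -> L p -> L q -> ~ L x.
Proof.
  intros Hn HL Lp Lq Lx. exact (Hn (collinear_triple_of_line x p q L HL Lx Lp Lq)).
Qed.

Lemma plane_flat_hull S x p q : S x -> S p -> S q -> ~ collinear (triple x p q) ->
  subset S (flat_hull Lines (triple x p q)) -> plane Lines (flat_hull Lines S).
Proof.
  intros Sx Sp Sq Hn HS. split; [apply flat_hull_flat|split].
  - exists [x; p; q]. split; [simpl; lia|].
    apply flat_hull_min; [apply flat_hull_flat|].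
    intros z Hz. apply (flat_hull_mono (triple x p q)), HS, Hz.
    intros w Hw. unfold triple in Hw. simpl. intuition.
  - intros m Hm Hr. apply Hn.
    assert (Hr2 : rank_le Lines (flat_hull Lines S) 2)
      by (destruct Hr as [B [HB HB']]; exists B; split; [lia|exact HB']).
    revert Hr2. apply collinear_subset.
    intros z Hz. apply subset_flat_hull. unfold triple in Hz. intuition congruence.
Qed.

End Liner.

Section Parallels.
Context {T : Type} (Lines : (T -> Prop) -> Prop).
Hypothesis HX : is_liner Lines.
Variable k : nat.
Hypothesis Hpar : kappa_parallel Lines k.

Lemma parallel_through_disjoint P L x M :
  parallel_through Lines P L x M -> disjoint L M.
Proof. intros [_ [_ HM]] z Lz Mz. exact (proj2 (HM z Mz) Lz). Qed.

Lemma parallel_through_mono P P' L x M : subset P P' ->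
  parallel_through Lines P L x M -> parallel_through Lines P' L x M.
Proof.
  intros HP [HM [Mx MP]]. split; [exact HM|split; [exact Mx|]].
  intros z Mz. destruct (MP z Mz). auto.
Qed.

Lemma exists_parallel_through P L x : 0 < k -> plane Lines P -> Lines L ->
  subset L P -> P x -> ~ L x -> exists M, parallel_through Lines P L x M.
Proof.
  intros Hk HP HL LP Px Lx.
  destruct (exactly_n_list _ _ (Hpar P L x HP HL LP Px Lx)) as [l [Hl [_ Hin]]].
  exists (nth 0 l (fun _ => False)). apply Hin, nth_In. lia.
Qed.

Lemma disjoint_coplanar_subparallel P L N : plane Lines P -> Lines L -> Lines N ->
  subset L P -> subset N P -> disjoint L N -> subparallel Lines N L.
Proof.
  intros HP HL HN LP NP Hdis x Nx.
  destruct HX as [_ [_ Htwo]]. destruct (Htwo L HL) as [p [q [Hpq [Lp Lq]]]].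
  assert (Lx : ~ L x) by (intro Lx; exact (Hdis x Lx Nx)).
  set (F := flat_hull Lines (fun z => z = x \/ L z)).
  assert (HF : plane Lines F).
  { apply (plane_flat_hull Lines _ x p q); auto.
    - intro Hcol. exact (Lx (collinear_on_line Lines HX x p q L Hcol Hpq HL Lp Lq)).
    - intros z [->|Lz]; [apply subset_flat_hull; left; reflexivity|].
      apply (line_subset_flat Lines HX _ L p q); auto; [apply flat_hull_flat| |];
        apply subset_flat_hull; unfold triple; auto. }
  assert (FP : subset F P)
    by (apply flat_hull_min; [apply HP|]; intros z [->|Lz]; auto).
  assert (LF : subset L F) by (intros z Lz; apply subset_flat_hull; auto).
  assert (Fx : F x) by (apply subset_flat_hull; auto).
  destruct (exactly_n_list _ _ (Hpar F L x HF HL LF Fx Lx)) as [l [Hl [Hd Hin]]].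
  destruct (exactly_n_complete _ _ l N (Hpar P L x HP HL LP (NP x Nx) Lx) Hl Hd)
    as [B [HB HNB]].
  - intros B HB. exact (parallel_through_mono _ _ _ _ _ FP (Hin B HB)).
  - split; [exact HN|split; [exact Nx|]].
    intros z Nz. split; [auto|]. intro Lz. exact (Hdis z Lz Nz).
  - intros z Nz. destruct (Hin B HB) as [_ [_ BF]]. apply (BF z), HNB, Nz.
Qed.

Lemma subparallel_ext A A' B B' : set_eq A A' -> set_eq B B' ->
  subparallel Lines A' B' -> subparallel Lines A B.
Proof.
  intros EA EB HS x Ax z Az.
  apply (flat_hull_mono Lines (fun w => w = x \/ B' w)).
  - intros w [->|Bw]; [left; reflexivity|right; apply EB, Bw].
  - apply HS; apply EA; assumption.
Qed.

Lemma line_through_parallel P L M u v u' v' : plane Lines P ->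
  Lines L -> Lines M -> subset L P -> subset M P -> disjoint L M ->
  u <> v -> L u -> L v -> u' <> v' -> M u' -> M v' ->
  parallel Lines (line_through Lines u v) (line_through Lines u' v').
Proof.
  intros HP HL HM LP MP Hdis Huv Lu Lv Hu'v' Mu' Mv'.
  pose proof (line_through_eq Lines HX u v L Huv HL Lu Lv) as EL.
  pose proof (line_through_eq Lines HX u' v' M Hu'v' HM Mu' Mv') as EM.
  split; [apply (subparallel_ext _ L _ M)|apply (subparallel_ext _ M _ L)]; auto;
    apply (disjoint_coplanar_subparallel P); auto.
  intros z Mz Lz. exact (Hdis z Lz Mz).
Qed.

Lemma line_through_not_eq L u v x y : Lines L -> u <> v -> L u -> L v -> ~ L x ->
  ~ set_eq (line_through Lines x y) (line_through Lines u v).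
Proof.
  intros HL Huv Lu Lv Lx E. apply Lx, (line_through_eq Lines HX u v L); auto.
  apply E. left. reflexivity.
Qed.

Lemma exists_parallel_meeting P L N M x y z : plane Lines P ->
  Lines L -> Lines N -> subset L P -> subset N P -> N x -> ~ L x -> N y -> L y ->
  parallel_through Lines P N z M ->
  exists Lam w, parallel_through Lines P L x Lam /\ Lam w /\ M w.
Proof.
  intros HP HL HN LP NP Nx Lx Ny Ly HM.
  pose proof (parallel_through_disjoint _ _ _ _ HM) as HdisNM.
  destruct HM as [HM [_ MP]].
  assert (MP' : subset M P) by (intros w Mw; exact (proj1 (MP w Mw))).
  destruct (exactly_n_list _ _ (Hpar P L x HP HL LP (NP x Nx) Lx)) as [l [Hl [Hd Hin]]].
  apply NNPP; intro Hnone.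
  destruct (exactly_n_complete _ _ l N
    (Hpar P M x HP HM MP' (NP x Nx) (HdisNM x Nx)) Hl Hd) as [B [HB HNB]].
  - intros A HA. destruct (Hin A HA) as [HA' [Ax AP]].
    split; [exact HA'|split; [exact Ax|]]. intros w Aw.
    split; [exact (proj1 (AP w Aw))|]. intro Mw.
    apply Hnone. exists A, w. exact (conj (Hin A HA) (conj Aw Mw)).
  - split; [exact HN|split; [exact Nx|]].
    intros w Nw. exact (conj (NP w Nw) (HdisNM w Nw)).
  - destruct (Hin B HB) as [_ [_ BP]]. exact (proj2 (BP y (proj1 (HNB y) Ny)) Ly).
Qed.

Lemma parallelogram_of_parallels P Lab Lbc Lcd Lda a b c d : plane Lines P ->
  Lines Lab -> Lines Lbc -> subset Lab P -> subset Lbc P ->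
  parallel_through Lines P Lab c Lcd -> parallel_through Lines P Lbc a Lda ->
  Lab a -> Lab b -> Lbc b -> Lbc c -> Lcd d -> Lda d -> parallelogram Lines a b c d.
Proof.
  intros HP HLab HLbc LabP LbcP Pcd Pda Laba Labb Lbcb Lbcc Lcdd Ldad.
  pose proof (parallel_through_disjoint _ _ _ _ Pcd) as Hac.
  pose proof (parallel_through_disjoint _ _ _ _ Pda) as Hbd.
  destruct Pcd as [HLcd [Lcdc LcdP]]. destruct Pda as [HLda [Ldaa LdaP]].
  assert (cLab : ~ Lab c) by exact (proj2 (LcdP c Lcdc)).
  assert (aLbc : ~ Lbc a) by exact (proj2 (LdaP a Ldaa)).
  assert (Hab : a <> b) by (intros ->; exact (aLbc Lbcb)).
  assert (Hbc : b <> c) by (intros ->; exact (cLab Labb)).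
  assert (Hcd : c <> d) by (intros ->; exact (Hbd d Lbcc Ldad)).
  assert (Had : a <> d) by (intros ->; exact (Hac d Laba Lcdd)).
  split; [|split; [|split]].
  - apply (line_through_parallel P Lab Lcd); auto.
    intros w Lcdw. exact (proj1 (LcdP w Lcdw)).
  - apply (line_through_not_eq Lab); auto.
  - apply (line_through_parallel P Lbc Lda); auto.
    intros w Ldaw. exact (proj1 (LdaP w Ldaw)).
  - apply (line_through_not_eq Lbc); auto.
Qed.

End Parallels.

Theorem proposition6p7p7 (T : Type) (Lines : (T -> Prop) -> Prop)
  (HX : is_liner Lines) (k : nat) (Hk : 0 < k)
  (Hpar : kappa_parallel Lines k) (a b c : T)
  (Habc : triangle Lines a b c) :
  exists d : T, parallelogram Lines a b c d.
Proof.
  assert (Hn : ~ collinear Lines (triple a b c)) by (apply (proj2 Habc); lia).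
  assert (Hn' : ~ collinear Lines (triple c a b)).
  { intro H. apply Hn. revert H. apply collinear_subset. unfold triple. intros z; tauto. }
  pose proof (noncollinear_neq Lines _ _ _ Hn') as Hab.
  pose proof (noncollinear_neq Lines _ _ _ Hn) as Hbc.
  destruct (proj1 HX a b Hab) as [Lab [HLab [Laba Labb]]].
  destruct (proj1 HX b c Hbc) as [Lbc [HLbc [Lbcb Lbcc]]].
  pose proof (noncollinear_not_on_line Lines HX _ _ _ Lab Hn' HLab Laba Labb) as cLab.
  pose proof (noncollinear_not_on_line Lines HX _ _ _ Lbc Hn HLbc Lbcb Lbcc) as aLbc.
  set (P := flat_hull Lines (triple a b c)).
  assert (HP : plane Lines P) by (apply (plane_flat_hull Lines _ a b c);
    unfold triple; auto; apply subset_flat_hull).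
  assert (Pa : P a) by (apply subset_flat_hull; left; reflexivity).
  assert (Pb : P b) by (apply subset_flat_hull; right; left; reflexivity).
  assert (Pc : P c) by (apply subset_flat_hull; right; right; reflexivity).
  assert (LabP : subset Lab P)
    by (apply (line_subset_flat Lines HX P Lab a b); auto; apply flat_hull_flat).
  assert (LbcP : subset Lbc P)
    by (apply (line_subset_flat Lines HX P Lbc b c); auto; apply flat_hull_flat).
  destruct (exists_parallel_through Lines k Hpar P Lab c Hk HP HLab LabP Pc cLab)
    as [M HM].
  destruct (exists_parallel_meeting Lines k Hpar P Lbc Lab M a b c HP HLbc HLab
    LbcP LabP Laba aLbc Labb Lbcb HM) as [Lam [d [HLam [Lamd Md]]]].
  exists d.
  exact (parallelogram_of_parallels Lines HX k Hpar P Lab Lbc M Lam a b c d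
    HP HLab HLbc LabP LbcP HM HLam Laba Labb Lbcb Lbcc Md Lamd).
Qed.
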